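(* Let $q$ be a positive integer and let $G=(V,E)$ be an undirected graph with $4q$ vertices. Then $G$ has a two-factor $E'$ all of whose cycle lengths are multiples of four if and only if $(G,\alpha)$ admits a $q$-biased $(2,2)$-dissolution, where $\alpha(v)=1$ for all $v\in V$.
   Context: A two-factor of $G=(V,E)$ is an edge subset $E'\subseteq E$ such that every vertex has degree exactly two in $(V,E')$, so $(V,E')$ is a disjoint union of cycles. For $V'\subseteq V(G)$ let $Z(V',G):=\{(x,y)\mid x\in V',\ y\in V(G)\setminus V',\ \{x,y\}\in E(G)\}$. For positive integers $s,\Delta_s$, an $(s,\Delta_s)$-dissolution for $G$ is a pair $(D,z)$ with $D\subset V(G)$ and $z\colon Z(D,G)\to\{0,\dots,s\}$ such that (a) each $v'\in D$ satisfies $\sum_{(v',v)\in Z(D,G)} z(v',v)=s$, and (b) each $v\in V(G)\setminus D$ satisfies $\sum_{(v',v)\in Z(D,G)} z(v',v)=\Delta_s$. Given $\alpha\colon V(G)\to\{0,\dots,s\}$ and an integer $r_\alpha$, a tuple $(D,z,z_\alpha,R_\alpha)$ is an $r_\alpha$-biased $(s,\Delta_s)$-dissolution for $(G,\alpha)$ if $(D,z)$ is an $(s,\Delta_s)$-dissolution, $z_\alpha\colon Z(D,G)\to\{0,\dots,s\}$, $R_\alpha\subseteq V(G)\setminus D$ with $|R_\alpha|=r_\alpha$, and (c) $z_\alpha(v',v)\le z(v',v)$ for all $(v',v)\in Z(D,G)$; (d) each $v'\in D$ satisfies $\sum_{(v',v)\in Z(D,G)} z_\alpha(v',v)=\alpha(v')$;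 (e) each $v\in R_\alpha$ satisfies $\alpha(v)+\sum_{(v',v)\in Z(D,G)} z_\alpha(v',v)>(s+\Delta_s)/2$. *)

From mathcomp Require Import all_boot.
Set Implicit Arguments. Unset Strict Implicit. Unset Printing Implicit Defensive.

Section Defs.
Variable T : finType.

Definition simple_graph (e : rel T) : Prop := symmetric e /\ irreflexive e.

Definition deg (F : rel T) (v : T) : nat := #|[set u | F v u]|.

(* An edge subset E' of E, encoded as a symmetric relation F contained in e,
   such that every vertex has degree exactly 2. *)
Definition two_factor (e F : rel T) : Prop :=
  symmetric F /\ (forall x y, F x y -> e x y) /\ (forall v, deg F v = 2).

(* The cycles of a two-factor are its connected components; the length of a
   cycle is the number of its vertices. *)
Definition cycle_lengths_mult4 (F : rel T) : Prop :=
  forall v : T, 4 %| #|[set u | connect F v u]|.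

(* (s, Delta_s)-dissolution (D, z); z is only meaningful on Z(D,G) =
   {(x,y) | x in D, y notin D, {x,y} in E}. *)
Definition dissolution (e : rel T) (s Ds : nat) (D : {set T})
    (z : T -> T -> nat) : Prop :=
  (forall x y, x \in D -> y \notin D -> e x y -> z x y <= s) /\
  (forall x, x \in D -> \sum_(y | (y \notin D) && e x y) z x y = s) /\
  (forall y, y \notin D -> \sum_(x | (x \in D) && e x y) z x y = Ds).

(* r-biased (s, Delta_s)-dissolution (D, z, za, R) for (G, alpha).
   Condition (e) "alpha v + sum > (s + Ds)/2" is written 2*(...) > s + Ds. *)
Definition biased_dissolution (e : rel T) (s Ds : nat) (alpha : T -> nat)
    (r : nat) (D : {set T}) (z za : T -> T -> nat) (R : {set T}) : Prop :=
  dissolution e s Ds D z /\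
  (forall x y, x \in D -> y \notin D -> e x y -> za x y <= s) /\
  R \subset ~: D /\ #|R| = r /\
  (forall x y, x \in D -> y \notin D -> e x y -> za x y <= z x y) /\
  (forall x, x \in D -> \sum_(y | (y \notin D) && e x y) za x y = alpha x) /\
  (forall y, y \in R ->
         s + Ds < 2 * (alpha y + \sum_(x | (x \in D) && e x y) za x y)).

Definition admits_biased_dissolution (e : rel T) (s Ds : nat)
    (alpha : T -> nat) (r : nat) : Prop :=
  exists D z za R, biased_dissolution e s Ds alpha r D z za R.

End Defs.

From mathcomp Require Import all_boot zify.
Set Implicit Arguments. Unset Strict Implicit. Unset Printing Implicit Defensive.

(* If the cycles of a two-factor F have lengths divisible by 4, label every
   cycle periodically 0,1,2,3 and put D := even labels, R := label 1: each D
   vertex sends one unit of z to each of its two cycle neighbours, and its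
   unique neighbour of label 1 receives its unit of z_alpha; the four label
   classes have the same size, so |R| = q.
   Conversely, counting z across the cut (D, ~: D) gives |D| = 2q; counting
   z_alpha then shows that z_alpha flows only into R, two units per vertex,
   so z never exceeds 1 and its support is a two-factor. In each cycle C the
   same two counts give |C| = 2 |C :&: D| = 4 |C :&: R|. *)

Lemma sum_nat_bool (I : finType) (P b : pred I) :
  \sum_(i | P i) (b i : nat) = #|[set i | P i && b i]|.
Proof. by rewrite -sum1dep_card big_mkcondr; apply: eq_bigr => i _; case: (b i). Qed.

Lemma sum_nat_le1 (I : finType) (P : pred I) (F : I -> nat) :
  (forall i, P i -> F i <= 1) ->
  \sum_(i | P i) F i = #|[set i | P i && (0 < F i)]|.
Proof.
move=> F_le1; rewrite -sum_nat_bool; apply: eq_bigr => i /F_le1.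
by case: (F i) => [|[|]].
Qed.

Lemma sum_nat_restrict (I : finType) (P Q : pred I) (F : I -> nat) :
  (forall i, P i -> 0 < F i -> Q i) ->
  \sum_(i | P i) F i = \sum_(i | P i && Q i) F i.
Proof.
move=> PFQ; rewrite (bigID Q) /= [X in _ + X]big1 ?addn0 // => i /andP[Pi nQi].
by apply/eqP; rewrite -leqn0 leqNgt; apply: contra nQi; apply: PFQ.
Qed.

Lemma sum_nat_le_concentrated (I : finType) (P : pred I) (F G : I -> nat) j :
  P j -> (forall i, P i -> G i <= F i) -> \sum_(i | P i) F i = F j ->
  \sum_(i | P i) G i = G j.
Proof.
move=> Pj GF; rewrite (bigD1 j) //= (bigD1 j Pj) /= => sumF.
have : \sum_(i | P i && (i != j)) G i <= \sum_(i | P i && (i != j)) F i.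
  by apply: leq_sum => i /andP[/GF].
lia.
Qed.

Lemma sum_cut_exchange (T : finType) (e : rel T) (D : {set T}) (C : pred T)
    (g : T -> T -> nat) :
  (forall x y, x \in D -> y \notin D -> e x y -> 0 < g x y -> C x = C y) ->
  \sum_(x | C x && (x \in D)) \sum_(y | (y \notin D) && e x y) g x y =
  \sum_(y | C y && (y \notin D)) \sum_(x | (x \in D) && e x y) g x y.
Proof.
move=> Cg.
transitivity (\sum_(x | C x && (x \in D))
                \sum_(y | ((y \notin D) && e x y) && C y) g x y).
  apply: eq_bigr => x /andP[Cx xD]; apply: sum_nat_restrict.
  by move=> y /andP[yD exy] /(Cg _ _ xD yD exy) <-.
rewrite (exchange_big_dep (fun y => C y && (y \notin D))) /=; last first.
  by move=> x y _ /andP[/andP[-> _] ->].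
apply: eq_bigr => y /andP[Cy yD].
rewrite [RHS](sum_nat_restrict (Q := C)); last first.
  by move=> x /andP[xD exy] /(Cg _ _ xD yD exy) ->.
apply: eq_bigl => x; rewrite yD Cy andbT.
by case: (C x); rewrite ?andbT ?andbF.
Qed.

Lemma deg2_nbrs (T : finType) (F : rel T) u a b :
  deg F u = 2 -> F u a -> F u b -> a != b ->
  forall c, F u c = (c == a) || (c == b).
Proof.
move=> degu Fa Fb ab c.
have : [set a; b] \subset [set c | F u c].
  by apply/subsetP=> t; rewrite !inE => /orP[]/eqP->.
move/subset_cardP; rewrite cards2 ab -[#|_|]/(deg F u) degu => /(_ erefl) E.
by have := E c; rewrite !inE.
Qed.

Lemma deg2_other_nbr (T : finType) (F : rel T) u p :
  deg F u = 2 -> exists c, F u c && (c != p).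
Proof.
rewrite /deg => /eqP/cards2P[a [b [ab E]]].
have nbrE c : F u c = (c == a) || (c == b).
  by move/setP: E => /(_ c); rewrite !inE.
have [Fa Fb] : F u a /\ F u b by rewrite !nbrE !eqxx orbT.
case: (eqVneq a p) => [<-|ap]; first by exists b; rewrite Fb eq_sym.
by exists a; rewrite Fa.
Qed.

Lemma sum_pred2_nbrs (T : finType) (F : rel T) (P g : pred T) u a b :
  a != b -> (forall c, F u c = (c == a) || (c == b)) -> P a -> P b ->
  \sum_(c | P c) (F u c && g c : nat) = g a + g b.
Proof.
move=> ab nbr Pa Pb.
rewrite (bigD1 a) //= (bigD1 b) /=; last by rewrite Pb eq_sym.
rewrite big1 ?addn0 => [|c /andP[/andP[_ ca] cb]]; last first.
  by rewrite nbr (negbTE ca) (negbTE cb).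
by rewrite !nbr !eqxx orbT.
Qed.

Lemma sum_pred2_nbrs_edges (T : finType) (F : rel T) (P : pred T) u a b :
  a != b -> (forall c, F u c = (c == a) || (c == b)) -> P a -> P b ->
  \sum_(c | P c) (F u c : nat) = 2.
Proof.
move=> ab nbr Pa Pb; rewrite -[2]/(predT a + predT b : nat).
rewrite -(sum_pred2_nbrs predT ab nbr Pa Pb).
by apply: eq_bigr => c _; rewrite andbT.
Qed.

Section CycleWalk.
Variables (T : finType) (F : rel T).
Hypotheses (symF : symmetric F) (irrF : irreflexive F)
           (degF : forall v, deg F v = 2).

Definition other_nbr u p := odflt p [pick c | F u c && (c != p)].
Definition some_nbr u := odflt u [pick c | F u c].

Lemma other_nbrP u p : F u (other_nbr u p) && (other_nbr u p != p).
Proof.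
rewrite /other_nbr; case: pickP => [c //|none].
by have [c Fc] := deg2_other_nbr p (degF u); have := none c; rewrite Fc.
Qed.

Lemma some_nbrP u : F u (some_nbr u).
Proof.
rewrite /some_nbr; case: pickP => [c //|none].
have [c /andP[Fc _]] := deg2_other_nbr u (degF u).
by have := none c; rewrite Fc.
Qed.

Variable v : T.

Definition walk_state n :=
  iter n (fun s => (s.2, other_nbr s.2 s.1)) (v, some_nbr v).
Definition walk n := (walk_state n).1.
Definition walk_prefix n := [seq walk i | i <- iota 0 n].

Lemma walk_stateE n : walk_state n = (walk n, walk n.+1).
Proof. by rewrite /walk /=; case: (walk_state n). Qed.

Lemma walkSS n : walk n.+2 = other_nbr (walk n.+1) (walk n).
Proof. by []. Qed.

Lemma walk_edge n : F (walk n) (walk n.+1).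
Proof.
case: n => [|n]; first exact: some_nbrP.
by rewrite walkSS; case/andP: (other_nbrP (walk n.+1) (walk n)).
Qed.

Lemma walk_edge_pred n : 0 < n -> F (walk n.-1) (walk n).
Proof. by case: n => // n _; apply: walk_edge. Qed.

Lemma walk_no_backtrack n : walk n.+2 != walk n.
Proof. by rewrite walkSS; case/andP: (other_nbrP (walk n.+1) (walk n)). Qed.

Lemma walk_nbrs n c : F (walk n.+1) c = (c == walk n) || (c == walk n.+2).
Proof.
apply: deg2_nbrs; rewrite ?walk_edge //; first by rewrite symF walk_edge.
by rewrite eq_sym walk_no_backtrack.
Qed.

Lemma uniq_walk_prefix n :
  (forall j, j < n -> walk j \notin walk_prefix j) -> uniq (walk_prefix n).
Proof.
elim: n => [//|n IH] fresh.
rewrite /walk_prefix -addn1 iotaD map_cat cat_uniq -/(walk_prefix n) IH /=.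
  by rewrite orbF andbT fresh.
by move=> j jn; apply: fresh; lia.
Qed.

Lemma walk_repeats : exists n, walk n \in walk_prefix n.
Proof.
have [/hasP[n _ rep] | /hasPn fresh] :=
  boolP (has (fun n => walk n \in walk_prefix n) (iota 0 #|T|.+1)).
  by exists n.
have : uniq (walk_prefix #|T|.+1).
  by apply: uniq_walk_prefix => j jn; apply: fresh; rewrite mem_iota.
move/card_uniqP; rewrite size_map size_iota => card_prefix.
by have := max_card (mem (walk_prefix #|T|.+1)); rewrite card_prefix ltnn.
Qed.

Definition period := ex_minn walk_repeats.

Lemma period_repeat : walk period \in walk_prefix period.
Proof. by rewrite /period; case: ex_minnP. Qed.

Lemma period_min n : walk n \in walk_prefix n -> period <= n.
Proof. by rewrite /period; case: ex_minnP => m _ min /min. Qed.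

Lemma uniq_period_prefix : uniq (walk_prefix period).
Proof. by apply: uniq_walk_prefix => j jk; apply/negP => /period_min; lia. Qed.

Lemma nth_walk_prefix n i : i < n -> nth v (walk_prefix n) i = walk i.
Proof. by move=> lt_in; rewrite (nth_map 0) ?size_iota // nth_iota. Qed.

Lemma walk_inj a b : a < period -> b < period -> walk a = walk b -> a = b.
Proof.
move=> ak bk E; apply/eqP.
rewrite -(nth_uniq v _ _ uniq_period_prefix) ?size_map ?size_iota //.
by rewrite !nth_walk_prefix // E.
Qed.

Lemma period_repeatP : exists2 j, j < period & walk period = walk j.
Proof.
by have /mapP[j] := period_repeat; rewrite mem_iota add0n => /andP[_ jk] ->; exists j.
Qed.

Lemma period_gt2 : 2 < period.
Proof.
have [j jk E] := period_repeatP; case: (ltnP 2 period) => // le_k2.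
have [k1|k2] : period = 1 \/ period = 2 by lia.
  by have := walk_edge 0; rewrite -k1 E (_ : j = 0) ?irrF //; lia.
have [j0|j1] : j = 0 \/ j = 1 by lia.
  by have := walk_no_backtrack 0; rewrite -k2 E j0 eqxx.
by have := walk_edge 1; rewrite -k2 E j1 irrF.
Qed.

(* The first repeated vertex is v itself: an earlier one would be adjacent
   to three distinct walk vertices. *)
Lemma walk_period : walk period = v.
Proof.
have k2 := period_gt2; have [[|i] // jk E] := period_repeatP; exfalso.
have : F (walk i.+1) (walk period.-1).
  by rewrite -E symF walk_edge_pred //; lia.
rewrite walk_nbrs => /orP[] /eqP /walk_inj inj.
  by have := inj _ _; lia.
case: (ltnP i.+2 period) => ik.
  have ki : period.-1 = i.+2 by apply: inj; lia.
  by have := walk_no_backtrack i.+1; rewrite (_ : i.+3 = period) ?E ?eqxx //; lia.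
by have := walk_edge i.+1; rewrite (_ : i.+2 = period) ?E ?irrF //; lia.
Qed.

Lemma walk_periodS : walk period.+1 = walk 1.
Proof.
have k2 := period_gt2.
have F0 : F v (walk period.-1).
  by rewrite -{1}walk_period symF walk_edge_pred //; lia.
have n1 : walk 1 != walk period.-1.
  by apply/eqP => /walk_inj inj; have := inj _ _; lia.
have := walk_edge period; rewrite walk_period (deg2_nbrs (degF v) (walk_edge 0) F0 n1).
case/orP=> /eqP // E.
have := walk_no_backtrack period.-1.
by rewrite (_ : period.-1.+2 = period.+1) ?E ?eqxx //; lia.
Qed.

Lemma walk_addn_period n : walk (n + period) = walk n.
Proof.
have E : walk_state period = walk_state 0.
  by rewrite !walk_stateE walk_period walk_periodS.
by rewrite /walk /walk_state iterD -/(walk_state period) E.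
Qed.

Lemma walk_mod n : walk n = walk (n %% period).
Proof.
rewrite {1}(divn_eq n period); elim: (n %/ period) => [|d IH] //.
by rewrite mulSn -addnA addnC walk_addn_period.
Qed.

Lemma walk_in_prefix n : walk n \in walk_prefix period.
Proof.
rewrite walk_mod; apply: map_f.
by rewrite mem_iota add0n ltn_mod; have := period_gt2; lia.
Qed.

Lemma index_walk n : index (walk n) (walk_prefix period) = n %% period.
Proof.
have k0 : 0 < period by have := period_gt2; lia.
rewrite walk_mod -(nth_walk_prefix (n := period)) ?ltn_mod //.
by rewrite index_uniq ?uniq_period_prefix ?size_map ?size_iota ?ltn_mod.
Qed.

Lemma connect_walkE : connect F v =i walk_prefix period.
Proof.
have csym := sym_connect_sym symF.
move=> u; apply/idP/idP => [vu|/mapP[i _ ->]].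
  rewrite -(closed_connect (e := F) _ vu) ?(walk_in_prefix 0) //.
  apply: intro_closed => // x y Fxy /mapP[i _ Ex]; move: Fxy.
  have i_pos : 0 < i + period by have := period_gt2; lia.
  rewrite Ex -walk_addn_period -(prednK i_pos).
  by rewrite walk_nbrs => /orP[]/eqP->; apply: walk_in_prefix.
elim: i => [|i IH]; first exact: connect0.
exact: connect_trans IH (connect1 (walk_edge i)).
Qed.

Lemma card_connect_walk : #|[set u | connect F v u]| = period.
Proof.
rewrite -(size_iota 0 period) -(size_map walk) -(card_uniqP uniq_period_prefix).
by apply: eq_card => u; rewrite inE -connect_walkE.
Qed.

End CycleWalk.

Definition mod4_labelling (T : finType) (F : rel T) (f : T -> nat) :=
  forall u, exists a b m, a != b /\ (forall c, F u c = (c == a) || (c == b)) /\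
    f a = m %% 4 /\ f u = m.+1 %% 4 /\ f b = m.+2 %% 4.

Section CycleLabel.
Variables (T : finType) (F : rel T).
Hypotheses (symF : symmetric F) (irrF : irreflexive F)
           (degF : forall v, deg F v = 2)
           (cycles4 : forall v, 4 %| #|[set u | connect F v u]|).

Definition cycle_label u :=
  index u (walk_prefix F (root F u) (period F (root F u))) %% 4.

Lemma cycle_label_walk r n : root F r = r -> cycle_label (walk F r n) = n %% 4.
Proof.
move=> rr; have csym := sym_connect_sym symF; rewrite /cycle_label.
have -> : root F (walk F r n) = r.
  rewrite -{2}rr; apply/esym/(rootP csym).
  rewrite -[connect F r _]/(_ \in connect F r) (connect_walkE symF irrF degF).
  exact: walk_in_prefix.
rewrite (index_walk symF irrF degF) modn_dvdm //.
by rewrite -(card_connect_walk symF irrF degF).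
Qed.

Lemma cycle_labelP : mod4_labelling F cycle_label.
Proof.
move=> u; have csym := sym_connect_sym symF; set r := root F u.
have rr : root F r = r by rewrite /r root_root.
have /mapP[i _ Eu] : u \in walk_prefix F r (period F r).
  by rewrite -(connect_walkE symF irrF degF) inE csym connect_root.
set m := (i + period F r).-1.
have {}Eu : u = walk F r m.+1.
  rewrite /m prednK ?(walk_addn_period symF irrF degF) //.
  by have := period_gt2 irrF degF r; lia.
exists (walk F r m), (walk F r m.+2), m; split; first by rewrite eq_sym walk_no_backtrack.
split; first by move=> c; rewrite Eu (walk_nbrs symF degF).
by rewrite Eu !cycle_label_walk.
Qed.

End CycleLabel.

Section LabellingToDissolution.
Variables (T : finType) (e F : rel T) (f : T -> nat) (q : nat).
Hypotheses (symF : symmetric F) (Fe : forall x y, F x y -> e x y)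
           (labf : mod4_labelling F f) (cardT : #|T| = 4 * q).

Lemma label_lt4 u : f u < 4.
Proof. by have [a [b [m [_ [_ [_ [-> _]]]]]]] := labf u; rewrite ltn_mod. Qed.

Definition succ_nbr u := odflt u [pick c | F u c && (f c == (f u).+1 %% 4)].

Lemma succ_nbrP u : F u (succ_nbr u) /\ f (succ_nbr u) = (f u).+1 %% 4.
Proof.
rewrite /succ_nbr; case: pickP => [c /andP[Fc /eqP -> //]|none].
have [a [b [m [_ [nbr [_ [fu fb]]]]]]] := labf u.
by have := none b; rewrite nbr eqxx orbT fb fu /=; move/negP; case; apply/eqP; lia.
Qed.

Lemma succ_nbr_inj : injective succ_nbr.
Proof.
move=> u u' E.
have [F1 f1] := succ_nbrP u; have [F2 f2] := succ_nbrP u'.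
rewrite E symF in F1 f1; rewrite symF in F2.
have := label_lt4 u; have := label_lt4 u' => l1 l2.
have [a [b [m [ab [nbr [fa [_ fb]]]]]]] := labf (succ_nbr u').
rewrite !nbr in F1 F2.
by case/orP: F1 => /eqP E1; case/orP: F2 => /eqP E2; rewrite ?E1 ?E2 //; subst; lia.
Qed.

Definition level i := [set u | f u == i].

Lemma card_level_le i : #|level i| <= #|level (i.+1 %% 4)|.
Proof.
rewrite -(card_imset (level i) succ_nbr_inj); apply: subset_leq_card.
apply/subsetP => t /imsetP[u]; rewrite !inE => /eqP <- ->.
by have [_ ->] := succ_nbrP u.
Qed.

Lemma card_level1 : #|level 1| = q.
Proof.
have l0 : #|level 0| <= #|level 1| := card_level_le 0.
have l1 : #|level 1| <= #|level 2| := card_level_le 1.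
have l2 : #|level 2| <= #|level 3| := card_level_le 2.
have l3 : #|level 3| <= #|level 0| := card_level_le 3.
suff : #|T| = #|level 0| + #|level 1| + #|level 2| + #|level 3| by lia.
rewrite -[#|T|]sum1_card (eq_bigr (fun u =>
   (f u == 0 : nat) + (f u == 1 : nat) + (f u == 2 : nat) + (f u == 3 : nat))).
  by rewrite !big_split /= !sum_nat_bool; congr (_ + _ + _ + _); apply: eq_card.
by move=> u _; have := label_lt4 u; case: (f u) => [|[|[|[|]]]].
Qed.

Lemma labelling_dissolution : admits_biased_dissolution e 2 2 (fun _ => 1) q.
Proof.
pose D := [set u | ~~ odd (f u)].
exists D, (fun x y => (F x y : nat)), (fun x y => (F x y && (f y == 1) : nat)), (level 1).
split; [split; [|split]|split; [|split; [|split; [|split; [|split]]]]].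
- by move=> x y _ _ _; case: (F x y).
- move=> x; rewrite inE => xD.
  have [a [b [m [ab [nbr [fa [fx fb]]]]]]] := labf x.
  have [Fa Fb] : F x a /\ F x b by rewrite !nbr !eqxx orbT.
  by apply: sum_pred2_nbrs_edges ab nbr _ _; rewrite !inE Fe // andbT; lia.
- move=> y; rewrite inE => yD; under eq_bigr do rewrite symF.
  have [a [b [m [ab [nbr [fa [fy fb]]]]]]] := labf y.
  have [Fa Fb] : F a y /\ F b y by rewrite ![F _ y]symF !nbr !eqxx orbT.
  by apply: sum_pred2_nbrs_edges ab nbr _ _; rewrite !inE Fe // andbT; lia.
- by move=> x y _ _ _; case: (F x y); case: (f y == 1).
- by apply/subsetP => u; rewrite !inE => /eqP->.
- exact: card_level1.
- by move=> x y _ _ _; case: (F x y); case: (f y == 1).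
- move=> x; rewrite inE => xD.
  have [a [b [m [ab [nbr [fa [fx fb]]]]]]] := labf x.
  have [Fa Fb] : F x a /\ F x b by rewrite !nbr !eqxx orbT.
  rewrite (sum_pred2_nbrs (fun y => f y == 1) ab nbr) /= ?inE ?Fe ?andbT //; lia.
- move=> y; rewrite inE => /eqP fy1; under eq_bigr do rewrite symF fy1 eqxx andbT.
  have [a [b [m [ab [nbr [fa [fy fb]]]]]]] := labf y.
  have [Fa Fb] : F a y /\ F b y by rewrite ![F _ y]symF !nbr !eqxx orbT.
  by rewrite (sum_pred2_nbrs_edges ab nbr) //; rewrite !inE Fe // andbT; lia.
Qed.

End LabellingToDissolution.

Section DissolutionToTwoFactor.
Variables (T : finType) (e : rel T) (q : nat) (D : {set T}) (z za : T -> T -> nat)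
          (R : {set T}).
Hypotheses (syme : symmetric e) (cardT : #|T| = 4 * q).
Hypotheses
  (z_le2 : forall x y, x \in D -> y \notin D -> e x y -> z x y <= 2)
  (z_out : forall x, x \in D -> \sum_(y | (y \notin D) && e x y) z x y = 2)
  (z_in : forall y, y \notin D -> \sum_(x | (x \in D) && e x y) z x y = 2)
  (R_out : R \subset ~: D) (card_R : #|R| = q)
  (za_le_z : forall x y, x \in D -> y \notin D -> e x y -> za x y <= z x y)
  (za_out : forall x, x \in D -> \sum_(y | (y \notin D) && e x y) za x y = 1)
  (za_R : forall y, y \in R ->
            2 + 2 < 2 * (1 + \sum_(x | (x \in D) && e x y) za x y)).

Definition inflow y := \sum_(x | (x \in D) && e x y) za x y.

Lemma R_notin_D y : y \in R -> y \notin D.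
Proof. by move=> yR; have := subsetP R_out y yR; rewrite inE. Qed.

Lemma inflow_le2 y : y \notin D -> inflow y <= 2.
Proof.
by move=> yD; rewrite -(z_in yD); apply: leq_sum => x /andP[xD exy]; apply: za_le_z.
Qed.

Lemma inflow_R y : y \in R -> inflow y = 2.
Proof.
move=> yR; have := za_R yR; have := inflow_le2 (R_notin_D yR).
by rewrite /inflow; lia.
Qed.

Section CutClass.
Variable C : pred T.
Hypothesis C_z : forall x y, x \in D -> y \notin D -> e x y -> 0 < z x y -> C x = C y.

Lemma card_class_D :
  #|[set x | C x && (x \in D)]| = #|[set y | C y && (y \notin D)]|.
Proof.
have := sum_cut_exchange C_z.
rewrite (eq_bigr (fun _ => 2)); last by move=> x /andP[_ /z_out].
rewrite [RHS](eq_bigr (fun _ => 2)); last by move=> y /andP[_ /z_in].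
by rewrite !sum_nat_cond_const; lia.
Qed.

Lemma sum_inflow_class :
  \sum_(y | C y && (y \notin D)) inflow y = #|[set x | C x && (x \in D)]|.
Proof.
have za_z x y : x \in D -> y \notin D -> e x y -> 0 < za x y -> C x = C y.
  by move=> xD yD exy za0; apply: C_z => //; apply: leq_trans za0 (za_le_z _ _ _).
rewrite -(sum_cut_exchange za_z) (eq_bigr (fun _ => 1)); last first.
  by move=> x /andP[_ /za_out].
by rewrite sum_nat_cond_const muln1.
Qed.

End CutClass.

Lemma card_D : #|D| = 2 * q.
Proof.
have DE : [set x | predT x && (x \in D)] = D by apply/setP => x; rewrite inE.
have DCE : [set x | predT x && (x \notin D)] = ~: D by apply/setP => x; rewrite !inE.
have := card_class_D (C := predT) (fun _ _ _ _ _ _ => erefl).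
by rewrite DE DCE; have := cardsC D; rewrite cardT; lia.
Qed.

Lemma inflowE y : y \notin D -> inflow y = (y \in R) * 2.
Proof.
move=> yD; case: (boolP (y \in R)) => [/inflow_R //|yR].
have := sum_inflow_class (C := predT) (fun _ _ _ _ _ _ => erefl).
rewrite (bigID (mem R)) /= (eq_bigl (mem R)); last first.
  by move=> t; rewrite andb_idl // => /R_notin_D.
rewrite (eq_bigr (fun _ => 2)) ?sum_nat_cond_const; last by move=> t /inflow_R.
have -> : #|[set x | predT x && (x \in D)]| = #|D| by apply: eq_card => x; rewrite inE.
have -> : #|[set x | x \in R]| = #|R| by apply: eq_card => x; rewrite inE.
rewrite card_D card_R => E.
have /eqP : \sum_(t | (t \notin D) && (t \notin R)) inflow t = 0 by lia.
by rewrite sum_nat_eq0 => /forallP /(_ y); rewrite yD yR /= => /eqP.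
Qed.

(* z x y = 2 would force all of x's z_alpha onto y, giving inflow y = 1,
   which is neither 0 nor 2. *)
Lemma z_le1 x y : x \in D -> y \notin D -> e x y -> z x y <= 1.
Proof.
move=> xD yD exy; rewrite leqNgt; apply/negP => z_gt1.
have zxy : z x y = 2 by have := z_le2 xD yD exy; lia.
have za_xy : za x y = 1.
  rewrite -(za_out xD) (sum_nat_le_concentrated (F := z x) (j := y)) ?yD //.
    by move=> t /andP[tD ext]; apply: za_le_z.
  by rewrite z_out // zxy.
have : inflow y = za x y.
  apply: (sum_nat_le_concentrated (F := fun t => z t y)); first by rewrite xD.
    by move=> t /andP[tD ety]; apply: za_le_z.
  by rewrite z_in // zxy.
by rewrite inflowE // za_xy; case: (y \in R).
Qed.

Definition cut_support x y :=
  e x y && (((x \in D) && (y \notin D) && (0 < z x y)) ||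
            ((y \in D) && (x \notin D) && (0 < z y x))).

Lemma cut_support_sym : symmetric cut_support.
Proof. by move=> x y; rewrite /cut_support syme orbC. Qed.

Lemma deg_cut_support x : deg cut_support x = 2.
Proof.
rewrite /deg; have [xD|xD] := boolP (x \in D).
  rewrite -(z_out xD) sum_nat_le1; last by move=> u /andP[uD exu]; apply: z_le1.
  apply: eq_card => u; rewrite !inE /cut_support xD /= andbF orbF.
  by case: (e x u); case: (u \in D).
rewrite -(z_in xD) sum_nat_le1; last by move=> u /andP[uD eux]; apply: z_le1.
apply: eq_card => u; rewrite !inE /cut_support (negbTE xD) /= syme.
by case: (u \in D); case: (e u x).
Qed.

Lemma cut_support_cycles4 v : 4 %| #|[set u | connect cut_support v u]|.
Proof.
have csym := sym_connect_sym cut_support_sym.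
pose C := connect cut_support v.
have C_z x y : x \in D -> y \notin D -> e x y -> 0 < z x y -> C x = C y.
  move=> xD yD exy z0; apply: (connect_closed csym v).
  by rewrite /cut_support xD yD exy z0.
have CD := card_class_D C_z.
have := sum_inflow_class C_z.
rewrite (eq_bigr (fun y => (y \in R) * 2)); last by move=> y /andP[_ /inflowE].
rewrite -big_distrl /= sum_nat_bool => CR.
have -> : #|[set u | connect cut_support v u]| =
          #|[set x | C x && (x \in D)]| + #|[set x | C x && (x \notin D)]|.
  rewrite -sum1_card (bigID (mem D)) /= !sum_nat_cond_const !muln1.
  by congr (_ + _); apply: eq_card => u; rewrite !inE.
by apply/dvdnP; exists #|[set y | C y && (y \notin D) && (y \in R)]|; lia.
Qed.

End DissolutionToTwoFactor.

Theorem lemma4 (T : finType) (e : rel T) (q : nat) :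
  0 < q -> simple_graph e -> #|T| = 4 * q ->
  ((exists F : rel T, two_factor e F /\ cycle_lengths_mult4 F) <->
   admits_biased_dissolution e 2 2 (fun _ => 1) q).
Proof.
move=> _ [syme irre] cardT; split.
  case=> F [[symF [Fe degF]] cycles4].
  have irrF : irreflexive F by move=> x; apply/negP => /Fe; rewrite irre.
  exact: labelling_dissolution symF Fe (cycle_labelP symF irrF degF cycles4) cardT.
case=> D [z [za [R [[z_le2 [z_out z_in]] [_ [R_out [card_R [za_le_z [za_out za_R]]]]]]]]].
rewrite /= in za_out za_R; exists (cut_support e D z); split.
  split; first exact: cut_support_sym.
  split; first by move=> x y /andP[].
  exact: (deg_cut_support syme cardT z_le2 z_out z_in R_out card_R za_le_z za_out za_R).
exact: (cut_support_cycles4 syme cardT z_out z_in R_out card_R za_le_z za_out za_R).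
Qed.
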